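(* Let $f,g\in\mathbb B(X)$ with $f$ modular in $g$, and write $s=f_{g/1}$, $t=f_{g/0}$. Then, pointwise on $2^X$ (treating the $\{0,1\}$-valued games as Boolean-valued), $$\omega_f=\omega_g\,\omega_{\overline g}\,(\omega_s\lor\omega_t)\ \lor\ \omega_g\,\overline{\omega_{\overline g}}\,\omega_s\ \lor\ \overline{\omega_g}\,\omega_{\overline g}\,\omega_t\ \lor\ \overline{\omega_g}\,\overline{\omega_{\overline g}}\,\omega_{st}.$$ If moreover $f$ is monotonically modular in $g$, then $\omega_f=\omega_g\,\omega_s\lor\overline{\omega_g}\,\omega_t$.
   Context: $X$ is a fixed finite set of variables. An assignment over $U\subseteq X$ is a map $\mathbf u:U\to\{0,1\}$; $\mathbf u;\mathbf w$ is concatenation of assignments with disjoint domains. $\mathbb B(X)$ is the set of Boolean functions $\{0,1\}^X\to\{0,1\}$, combined pointwise ($st=s\land t$, $\overline f$ negation); $f_{x/c}$ is $f$ with $x$ fixed to $c$; $\mathrm{dep}(f)=\{x:f_{x/1}\ne f_{x/0}\}$; $f[x/s]=s f_{x/1}\lor\overline s f_{x/0}$. Modularity: $f$ is modular in $g$ if $g$ is not constant and there are $\ell\in\mathbb B(X)$, $z\in X$ with $\mathrm{dep}(\ell)\cap\mathrm{dep}(g)=\emptyset$ and $f=\ell[z/g]$; monotonically modular if moreover $\ell_{z/1}\ge\ell_{z/0}$. Then $f_{g/1}:=\ell_{z/1}$ and $f_{g/0}:=\ell_{z/0}$ (well defined). The dominating CGM assigns to $f$ the game $\omega_f:2^X\to\{0,1\}$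 with $\omega_f(S)=1$ iff there is $\mathbf u\in\{0,1\}^S$ with $f(\mathbf u;\mathbf w)=1$ for all $\mathbf w\in\{0,1\}^{X\setminus S}$. *)

From mathcomp Require Import all_boot.
Set Implicit Arguments. Unset Strict Implicit. Unset Printing Implicit Defensive.

Section BoolFun.
Variable X : finType.

Definition assignment := {ffun X -> bool}.
Definition bfun := assignment -> bool.

Definition band (s t : bfun) : bfun := fun a => s a && t a.
Definition bor (s t : bfun) : bfun := fun a => s a || t a.
Definition bneg (f : bfun) : bfun := fun a => ~~ f a.

Definition upd (a : assignment) (x : X) (c : bool) : assignment :=
  [ffun y => if y == x then c else a y].

Definition cofactor (f : bfun) (x : X) (c : bool) : bfun :=
  fun a => f (upd a x c).

Definition dep (f : bfun) : {set X} :=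
  [set x | [exists a, cofactor f x true a != cofactor f x false a]].

Definition subst (f : bfun) (x : X) (s : bfun) : bfun :=
  bor (band s (cofactor f x true)) (band (bneg s) (cofactor f x false)).

Definition nonconstant (g : bfun) : Prop := exists a b, g a != g b.

Definition modular_wit (f g l : bfun) (z : X) : Prop :=
  [/\ nonconstant g, dep l :&: dep g = set0 & forall a, f a = subst l z g a].

Definition modular (f g : bfun) : Prop := exists l z, modular_wit f g l z.

Definition mono_modular_wit (f g l : bfun) (z : X) : Prop :=
  modular_wit f g l z /\ forall a, cofactor l z false a ==> cofactor l z true a.

Definition mono_modular (f g : bfun) : Prop := exists l z, mono_modular_wit f g l z.

Definition concat (S : {set X}) (u w : assignment) : assignment :=
  [ffun x => if x \in S then u x else w x].

(* dominating CGM: omega_f(S) = 1 iff some u on S forces f to 1 *)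
Definition omega (f : bfun) (S : {set X}) : bool :=
  [exists u : assignment, [forall w : assignment, f (concat S u w)]].

End BoolFun.

(* Because dep l and dep g are disjoint, f is "if g then s else t" where the
   cofactors s and t ignore the variables of g.  Assignments of S forcing g (or
   not-g) and forcing the matching branch can thus be glued along dep g into
   one forcing f.  Conversely, if u forces f and some completion of u makes g
   true (resp. false), then u itself forces s (resp. t): complete u by that
   completion on dep g and arbitrarily elsewhere.  Sorting by which of g and
   not-g are forced at S yields the four cases; under monotonicity t <= s, so
   forcing t already forces s t. *)

From mathcomp Require Import all_boot.

Set Implicit Arguments.
Unset Strict Implicit.
Unset Printing Implicit Defensive.

Section Modularity.
Variable X : finType.
Implicit Types (f g h l s t : bfun X) (a u w : assignment X) (A S : {set X}).

Lemma upd_id a x : upd a x (a x) = a.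
Proof. by apply/ffunP => y; rewrite ffunE; case: eqP => // ->. Qed.

Lemma eq_upd_indep h a x c : x \notin dep h -> h (upd a x c) = h a.
Proof.
rewrite inE negb_exists => /forallP/(_ a); rewrite negbK /cofactor => /eqP hx.
by rewrite -{2}(upd_id a x); case: c (a x) => [] []; rewrite ?hx.
Qed.

Lemma eq_on_dep_seq h (r : seq X) (a b : assignment X) :
  (forall x, x \notin r -> a x = b x) -> {in r, forall x, x \notin dep h} ->
  h a = h b.
Proof.
elim: r a => [|x r IHr] a ab_eq r_indep.
  by congr h; apply/ffunP => y; apply: ab_eq.
rewrite -(eq_upd_indep a (b x) (r_indep x (mem_head x r))).
apply: IHr => [y | y yr]; last by apply: r_indep; rewrite in_cons yr orbT.
rewrite ffunE; case: eqP => [-> //|/eqP yx yr].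
by apply: ab_eq; rewrite in_cons negb_or yx.
Qed.

Lemma eq_on_dep h (a b : assignment X) : {in dep h, forall x, a x = b x} -> h a = h b.
Proof.
move=> ab_eq; apply: (@eq_on_dep_seq h (enum (~: dep h))) => x.
  by rewrite mem_enum inE negbK; apply: ab_eq.
by rewrite mem_enum inE.
Qed.

Lemma concat_id A w : concat A w w = w.
Proof. by apply/ffunP => x; rewrite ffunE if_same. Qed.

Lemma concatA A S u1 u2 w1 w2 :
  concat S (concat A u1 u2) (concat A w1 w2) =
  concat A (concat S u1 w1) (concat S u2 w2).
Proof. by apply/ffunP => x; rewrite !ffunE; case: (x \in S); case: (x \in A). Qed.

Lemma concat_dep g a1 a2 : g (concat (dep g) a1 a2) = g a1.
Proof. by apply: eq_on_dep => x xg; rewrite ffunE xg. Qed.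

Definition indep h A := forall a1 a2, h (concat A a1 a2) = h a2.

Lemma cofactor_indep l z c A : dep l :&: A = set0 -> indep (cofactor l z c) A.
Proof.
move=> disj a1 a2; rewrite /cofactor; apply: eq_on_dep => y yl; rewrite !ffunE.
case: (y == z) => //; case: ifP => // yA.
by have := in_set0 y; rewrite -disj inE yl yA.
Qed.

Lemma omega_mono h h' S : (forall a, h a -> h' a) -> omega h S -> omega h' S.
Proof.
move=> hh' /existsP[u /forallP hu]; apply/existsP; exists u.
by apply/forallP => w; apply: hh'.
Qed.

Lemma eq_omega h h' S : h =1 h' -> omega h S = omega h' S.
Proof. by move=> eq_h; apply/idP/idP; apply: omega_mono => a; rewrite eq_h. Qed.

Lemma omegaPn h S : ~~ omega h S -> forall u, exists w, ~~ h (concat S u w).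
Proof. by rewrite negb_exists => /forallP hS u; apply/existsP; rewrite -negb_forall. Qed.

Definition ite g s t : bfun X := fun a => if g a then s a else t a.

Section IfThenElse.
Variables (g s t : bfun X) (S : {set X}).
Hypotheses (s_indep : indep s (dep g)) (t_indep : indep t (dep g)).

Lemma ite_concat_dep a1 a2 :
  ite g s t (concat (dep g) a1 a2) = (if g a1 then s else t) a2.
Proof. by rewrite /ite concat_dep s_indep t_indep; case: (g a1). Qed.

Lemma ite_glue b u1 u2 :
  (forall w, g (concat S u1 w) = b) -> (forall w, (if b then s else t) (concat S u2 w)) ->
  forall w, ite g s t (concat S (concat (dep g) u1 u2) w).
Proof. by move=> gb hb w; rewrite -(concat_id (dep g) w) concatA ite_concat_dep gb. Qed.

Lemma ite_forced_branch b u w0 :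
  (forall w, ite g s t (concat S u w)) -> g (concat S u w0) = b ->
  forall w, (if b then s else t) (concat S u w).
Proof.
move=> hu gb w; have := hu (concat (dep g) w0 w).
by rewrite -{1}(concat_id (dep g) u) concatA ite_concat_dep gb.
Qed.

Lemma omega_ite_l : omega g S -> omega s S -> omega (ite g s t) S.
Proof.
move=> /existsP[u1 /forallP g1] /existsP[u2 /forallP s2].
by apply/existsP; exists (concat (dep g) u1 u2); apply/forallP; apply: (@ite_glue true).
Qed.

Lemma omega_ite_r : omega (bneg g) S -> omega t S -> omega (ite g s t) S.
Proof.
move=> /existsP[u1 /forallP g1] /existsP[u2 /forallP t2].
apply/existsP; exists (concat (dep g) u1 u2); apply/forallP.
by apply: (@ite_glue false) => // w; apply/negbTE/g1.
Qed.

Lemma omega_ite_s : omega (ite g s t) S -> ~~ omega (bneg g) S -> omega s S.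
Proof.
move=> /existsP[u /forallP hu] /omegaPn/(_ u)[w0]; rewrite negbK => gw0.
by apply/existsP; exists u; apply/forallP; apply: (ite_forced_branch hu gw0).
Qed.

Lemma omega_ite_t : omega (ite g s t) S -> ~~ omega g S -> omega t S.
Proof.
move=> /existsP[u /forallP hu] /omegaPn/(_ u)[w0 /negbTE gw0].
by apply/existsP; exists u; apply/forallP; apply: (ite_forced_branch hu gw0).
Qed.

Lemma omega_ite_or : omega (ite g s t) S -> omega s S || omega t S.
Proof.
move=> /existsP[u /forallP hu].
have := ite_forced_branch hu (erefl (g (concat S u u))).
by case: (g _) => forced; apply/orP; [left | right]; apply/existsP; exists u; apply/forallP.
Qed.

Lemma omega_ite_st :
  omega (ite g s t) S -> ~~ omega g S -> ~~ omega (bneg g) S -> omega (band s t) S.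
Proof.
move=> /existsP[u /forallP hu] /omegaPn/(_ u)[w0 /negbTE gw0].
move=> /omegaPn/(_ u)[w1]; rewrite negbK => gw1.
apply/existsP; exists u; apply/forallP => w.
by rewrite /band (ite_forced_branch hu gw1) (ite_forced_branch hu gw0).
Qed.

Lemma omega_ite :
  omega (ite g s t) S =
  [|| [&& omega g S, omega (bneg g) S & omega s S || omega t S],
      [&& omega g S, ~~ omega (bneg g) S & omega s S],
      [&& ~~ omega g S, omega (bneg g) S & omega t S]
    | [&& ~~ omega g S, ~~ omega (bneg g) S & omega (band s t) S]].
Proof.
have st_ite : omega (band s t) S -> omega (ite g s t) S.
  by apply: omega_mono => a /andP[sa ta]; rewrite /ite sa ta if_same.
case G: (omega g S); case N: (omega (bneg g) S) => /=; rewrite ?orbF.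
- apply/idP/idP => [/omega_ite_or //|/orP[]]; first exact: omega_ite_l G.
  exact: omega_ite_r N.
- apply/idP/idP => [ite_S|]; [exact: omega_ite_s ite_S (negbT N) | exact: omega_ite_l G].
- apply/idP/idP => [ite_S|]; [exact: omega_ite_t ite_S (negbT G) | exact: omega_ite_r N].
- apply/idP/idP => [ite_S|]; last exact: st_ite.
  exact: omega_ite_st ite_S (negbT G) (negbT N).
Qed.

Lemma omega_ite_mono : (forall a, t a -> s a) ->
  omega (ite g s t) S = (omega g S && omega s S) || (~~ omega g S && omega t S).
Proof.
move=> ts; have t_s : omega t S -> omega s S := omega_mono ts.
have t_st : omega t S = omega (band s t) S.
  by apply/idP/idP; apply: omega_mono => a; rewrite /band; [move=> ta; rewrite ts | case/andP].
rewrite omega_ite -t_st; case: (omega g S); case: (omega (bneg g) S) => //=.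
- by case: (omega s S) t_s; case: (omega t S) => //= ->.
- by rewrite !orbF.
Qed.

End IfThenElse.

End Modularity.

Theorem mainTheorem13 (X : finType) (f g l : bfun X) (z : X) :
  modular_wit f g l z ->
  let s := cofactor l z true in
  let t := cofactor l z false in
  (forall S : {set X},
     omega f S =
     [|| [&& omega g S, omega (bneg g) S & omega s S || omega t S],
         [&& omega g S, ~~ omega (bneg g) S & omega s S],
         [&& ~~ omega g S, omega (bneg g) S & omega t S]
       | [&& ~~ omega g S, ~~ omega (bneg g) S & omega (band s t) S]]) /\
  (mono_modular_wit f g l z ->
   forall S : {set X},
     omega f S = (omega g S && omega s S) || (~~ omega g S && omega t S)).
Proof.
move=> [_ disj f_subst] s t.
have f_ite : f =1 ite g s t.
  by move=> a; rewrite f_subst /subst /bor /band /bneg /ite; case: (g a); rewrite ?orbF.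
have s_indep : indep s (dep g) := cofactor_indep z true disj.
have t_indep : indep t (dep g) := cofactor_indep z false disj.
split=> [S | [_ t_s] S]; rewrite (eq_omega _ f_ite).
  exact: omega_ite s_indep t_indep.
by apply: omega_ite_mono s_indep t_indep _ => a; apply/implyP/t_s.
Qed.
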